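(* Let $A$ be $K\{X\}_\infty$ or $K\{X\}$ and let $f\in A^{(n)}$ be homogeneous of degree $n\ge1$. (i) If $f$ is primitive, then $\langle f,g_1\sqcup\!\sqcup g_2\rangle=0$ for all homogeneous $g_1,g_2\in A$ of degree $\ge1$. (ii) If $S$ is a monomial of degree $k$ with $1\le k\le n-1$, then $\partial_S(f)=0$ if and only if $\langle f,S\sqcup\!\sqcup g\rangle=0$ for all $g\in A^{(n-k)}$. (iii) If $f$ is orthogonal to all shuffle products $S\sqcup\!\sqcup T$ with $S,T$ monomials of degrees $k$ and $n-k$, $1\le k<\frac{n+1}{2}$, then $f$ is primitive.
   Context: $K$ is a field of characteristic $0$, $X=\{x_1,x_2,\dots\}$ a finite or countable set of variables. A planar rooted tree is reduced if no vertex has exactly one incoming edge. $K\{X\}_\infty$ has basis the monomials: the empty tree $1$ and all planar reduced rooted trees with leaves labelled by elements of $X$, graded by number of leaves ($A^{(n)}$); for $k\ge2$, $\vee^k$ grafts $k$ nonempty trees (in order) onto a new root, extended multilinearly, with unit conventions (arguments $1$ omitted, $\vee^1=\mathrm{id}$, $\vee^k(1,\dots,1)=1$). $K\{X\}$ is the span of $1$ and the binary monomials. $A\otimes A$ carries the operations componentwise, the co-addition $\Delta_a$ is the unique unital homomorphism with $\Delta_a(x_i)=x_i\otimes1+1\otimes x_i$, and $f$ is primitive if $\Delta_a(f)=f\otimes1+1\otimes f$. $\langle\,,\rangle$ is the bilinear form on $A$ making monomials orthonormal, extended factorwise to $A\otimes A$; $\sqcup\!\sqcup$ is defined by $\langle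 g_1\sqcup\!\sqcup g_2,h\rangle=\langle g_1\otimes g_2,\Delta_a(h)\rangle$ for all $h\in A$. For a monomial $T$ of $A$, $\partial_T:A\to A$ is defined by $\Delta_a(f)=\sum_T T\otimes\partial_T(f)$ (sum over monomials of $A$). *)

From HB Require Import structures.
From mathcomp Require Import all_boot all_order all_algebra.
Set Implicit Arguments. Unset Strict Implicit. Unset Printing Implicit Defensive.
Import Order.TTheory GRing.Theory Num.Theory.
Local Open Scope ring_scope.

(* Planar rooted trees with leaves labelled by X (not yet required reduced). *)
Inductive tree (X : Type) : Type :=
| Leaf of X
| Node of seq (tree X).
Arguments Leaf {X}.
Arguments Node {X}.

Section TreeCount.
Variable X : countType.

Fixpoint tree_enc (t : tree X) : GenTree.tree X :=
  match t with
  | Leaf x => GenTree.Leaf x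
  | Node ts => GenTree.Node 0 (map tree_enc ts)
  end.

Fixpoint tree_dec (g : GenTree.tree X) : option (tree X) :=
  match g with
  | GenTree.Leaf x => Some (Leaf x)
  | GenTree.Node _ gs => Some (Node (pmap tree_dec gs))
  end.

Lemma tree_encK : pcancel tree_enc tree_dec.
Proof.
rewrite /pcancel; fix IH 1; case=> [x|ts] //=; congr (Some (Node _)).
elim: ts => [|t ts IHts] //=; by rewrite IH /= IHts.
Qed.

HB.instance Definition _ := Countable.copy (tree X) (pcan_type tree_encK).
End TreeCount.

(* Monomials: None is the empty tree 1, Some t a nonempty tree. *)
Definition mon (X : countType) := option (tree X).

Fixpoint nleaves (X : Type) (t : tree X) : nat :=
  match t with Leaf _ => 1%N | Node ts => sumn (map (@nleaves X) ts) end.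

Definition deg (X : countType) (m : mon X) : nat :=
  if m is Some t then nleaves t else 0%N.

Fixpoint reduced (X : Type) (t : tree X) : bool :=
  match t with
  | Leaf _ => true
  | Node ts => (2 <= size ts)%N && all (@reduced X) ts
  end.

Fixpoint binary (X : Type) (t : tree X) : bool :=
  match t with
  | Leaf _ => true
  | Node ts => (size ts == 2)%N && all (@binary X) ts
  end.

(* Which algebra: K{X}_oo (all reduced monomials) or K{X} (binary ones). *)
Inductive algkind := Kinf | Kbin.

Definition admissible (A : algkind) (X : countType) (m : mon X) : bool :=
  match m with
  | None => true
  | Some t => reduced t && (if A is Kbin then binary t else true)
  end.

(* vee^k with unit conventions: arguments 1 omitted, vee^1 = id,
   vee^k(1,...,1) = 1. *)
Definition vee (X : countType) (ms : seq (mon X)) : mon X :=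
  match pmap id ms with
  | [::] => None
  | [:: t] => Some t
  | ts => Some (Node ts)
  end.

Definition choices (T : Type) (ls : seq (seq T)) : seq (seq T) :=
  foldr (fun l acc => [seq x :: r | x <- l, r <- acc]) [:: [::]] ls.

(* Co-addition on a nonempty tree, as a list of tensors T1 (x) T2 (each
   with coefficient 1): Delta(x) = x(x)1 + 1(x)x, and Delta is a
   homomorphism for the componentwise vee^k on A (x) A. *)
Fixpoint delta_tree (X : countType) (t : tree X) : seq (mon X * mon X) :=
  match t with
  | Leaf x => [:: (Some (Leaf x), None); (None, Some (Leaf x))]
  | Node ts =>
      [seq (vee (map fst ps), vee (map snd ps))
      | ps <- choices (map (@delta_tree X) ts)]
  end.

Definition delta_mon (X : countType) (m : mon X) : seq (mon X * mon X) :=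
  if m is Some t then delta_tree t else [:: (None, None)].

Section Lin.
Variables (X : countType) (K : fieldType).

(* Elements of A (resp. A (x) A) are finite formal linear combinations;
   they are compared through their coefficient functions. *)
Definition coef (M : eqType) (f : seq (K * M)) (m : M) : K :=
  \sum_(p <- f) p.1 * (p.2 == m)%:R.

Definition inA (A : algkind) (f : seq (K * mon X)) : Prop :=
  all (fun p => admissible A p.2) f.

Definition homog (n : nat) (f : seq (K * mon X)) : Prop :=
  forall m, coef f m != 0 -> deg m = n.

Definition monom (m : mon X) : seq (K * mon X) := [:: (1, m)].

Definition deltaA (f : seq (K * mon X)) : seq (K * (mon X * mon X)) :=
  flatten [seq [seq (p.1, q) | q <- delta_mon p.2] | p <- f].

Definition primitive (f : seq (K * mon X)) : Prop :=
  forall P : mon X * mon X,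
    coef (deltaA f) P =
    coef ([seq (p.1, (p.2, None)) | p <- f] ++ [seq (p.1, (None, p.2)) | p <- f]) P.

(* <f, h> for f in A and h given by its coefficient function *)
Definition pairing (f : seq (K * mon X)) (h : mon X -> K) : K :=
  \sum_(p <- f) p.1 * h p.2.

(* coefficient function of g1 ⊔⊔ g2 in A: its coefficient at a monomial T
   of A is <g1 (x) g2, Delta_a(T)>, and 0 outside A. *)
Definition shuffle (A : algkind) (g1 g2 : seq (K * mon X)) : mon X -> K :=
  fun T => if admissible A T then
             \sum_(q <- delta_mon T) coef g1 q.1 * coef g2 q.2
           else 0.

Definition dpart (S : mon X) (f : seq (K * mon X)) : mon X -> K :=
  fun U => coef (deltaA f) (S, U).

End Lin.

From HB Require Import structures.
From mathcomp Require Import all_boot all_order all_algebra.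
From mathcomp Require Import zify.
Set Implicit Arguments. Unset Strict Implicit. Unset Printing Implicit Defensive.
Import Order.TTheory GRing.Theory Num.Theory.
Local Open Scope ring_scope.

(* Everything is read off the coefficients [Delta_a f : T1 (x) T2], because
   <f, g1 ⊔⊔ g2> = sum_(T1, T2) [Delta_a f : T1 (x) T2] g1(T1) g2(T2).
   These coefficients vanish unless deg T1 + deg T2 = n, they are symmetric in
   (T1, T2) since Delta_a is cocommutative, and [Delta_a f : T (x) 1] is the
   coefficient of T in f, because T (x) 1 is the only term of Delta_a T with
   right factor 1.  So f is primitive exactly when the coefficients with both
   factors nonempty vanish, and by symmetry it is enough to check those with
   deg T1 <= deg T2, i.e. 2 deg T1 < n + 1. *)

Section LinearCombinations.
Variables (K : fieldType) (M : eqType).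
Implicit Types (L : seq (K * M)) (h : M -> K).

Lemma sumr_neq0_exists (I : eqType) (s : seq I) (F : I -> K) :
  \sum_(i <- s) F i != 0 -> exists2 i, i \in s & F i != 0.
Proof.
move=> sum_nz; apply/hasP; apply: contraNT sum_nz => /hasPn F0.
by rewrite big1_seq // => i /andP[_ /F0 /negPn /eqP].
Qed.

Lemma sum_coef L s h : uniq s -> {subset map snd L <= s} ->
  \sum_(p <- L) p.1 * h p.2 = \sum_(m <- s) coef L m * h m.
Proof.
move=> s_uniq Ls; under [RHS]eq_bigr do rewrite /coef mulr_suml.
rewrite exchange_big /= big_seq [RHS]big_seq; apply: eq_bigr => p pL.
have p2s : p.2 \in s by apply/Ls/map_f.
rewrite (big_rem _ p2s) /= eqxx mulr1 big1_seq ?addr0 // => m /andP[_].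
by rewrite mem_rem_uniq // => /andP[/negbTE m_p2 _]; rewrite eq_sym m_p2 mulr0 mul0r.
Qed.

Lemma sum_coef_undup L h :
  \sum_(p <- L) p.1 * h p.2 = \sum_(m <- undup (map snd L)) coef L m * h m.
Proof. by apply: sum_coef => [|m]; rewrite ?undup_uniq ?mem_undup. Qed.

Lemma eq_sum_coef L1 L2 h : coef L1 =1 coef L2 ->
  \sum_(p <- L1) p.1 * h p.2 = \sum_(p <- L2) p.1 * h p.2.
Proof.
move=> eq_coef; set s := undup (map snd (L1 ++ L2)).
rewrite (@sum_coef L1 s) ?(@sum_coef L2 s) ?undup_uniq //.
- by apply: eq_bigr => m _; rewrite eq_coef.
- by move=> m mL; rewrite mem_undup map_cat mem_cat mL orbT.
- by move=> m mL; rewrite mem_undup map_cat mem_cat mL.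
Qed.

Lemma eq_sum_supp L h1 h2 : (forall m, coef L m != 0 -> h1 m = h2 m) ->
  \sum_(p <- L) p.1 * h1 p.2 = \sum_(p <- L) p.1 * h2 p.2.
Proof.
move=> eq_h; rewrite !sum_coef_undup; apply: eq_bigr => m _.
by have [->|/eq_h ->] := eqVneq (coef L m) 0; rewrite ?mul0r.
Qed.

Lemma mem_coef_neq0 L m : coef L m != 0 -> m \in map snd L.
Proof.
case/sumr_neq0_exists=> p pL; have [<- _|_] := eqVneq p.2 m; first exact: map_f.
by rewrite mulr0 eqxx.
Qed.

End LinearCombinations.

Lemma map_choices (T U : Type) (g : T -> U) (ls : seq (seq T)) :
  map (map g) (choices ls) = choices (map (map g) ls).
Proof.
by elim: ls => [|l ls IH] //=; rewrite map_allpairs allpairs_mapl -IH allpairs_mapr.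
Qed.

Lemma perm_choices (T : eqType) (ls1 ls2 : seq (seq T)) :
  all2 perm_eq ls1 ls2 -> perm_eq (choices ls1) (choices ls2).
Proof.
by elim: ls1 ls2 => [|l1 ls1 IH] [|l2 ls2] //= /andP[l12 /IH]; apply: perm_allpairs.
Qed.

Lemma filter_choices (T : Type) (P : pred T) (ls : seq (seq T)) :
  filter (all P) (choices ls) = choices (map (filter P) ls).
Proof.
elim: ls => [|l ls IH] //=; rewrite -IH; elim: l => [|x l IHl] //=.
rewrite filter_cat IHl filter_map; case Px: (P x) => /=.
  by congr (_ ++ _); congr map; apply: eq_filter => r /=; rewrite Px.
by rewrite (@eq_filter _ _ pred0) ?filter_pred0 // => r /=; rewrite Px.
Qed.

Lemma choices_singletons (T : Type) (s : seq T) :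
  choices [seq [:: x] | x <- s] = [:: s].
Proof. by elim: s => [|x s IH] //=; rewrite IH. Qed.

Section Trees.
Variable X : countType.
Implicit Types (t : tree X) (ts : seq (tree X)) (ms : seq (mon X)).

Lemma tree_ind_in (P : tree X -> Prop) :
  (forall x, P (Leaf x)) -> (forall ts, {in ts, forall t, P t} -> P (Node ts)) ->
  forall t, P t.
Proof.
move=> PL PN; fix IH 1; case=> [x|ts]; first exact: PL.
(* [done] would close the nil case by [IH u], which the guard checker rejects. *)
apply: PN; elim: ts => [|t ts IHts] u; first move=> /notF [].
by case/predU1P=> [->|u_ts]; [exact: IH | exact: IHts].
Qed.

Lemma nleaves_gt0 t : reduced t -> (0 < nleaves t)%N.
Proof.
elim/tree_ind_in: t => [//|[|t ts] IH /andP[//= _ /andP[t_red _]]].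
by rewrite /= addn_gt0 IH ?mem_head.
Qed.

Lemma admissible_Node A ts :
  admissible A (Some (Node ts)) =
  [&& (2 <= size ts)%N, if A is Kbin then size ts == 2 else true
    & all (fun t => admissible A (Some t)) ts].
Proof.
case: A => /=.
  by rewrite !andbT; congr (_ && _); apply: eq_all => t; rewrite andbT.
by rewrite all_predI -!andbA; congr (_ && _); apply: andbCA.
Qed.

Lemma deg_vee ms : deg (vee ms) = sumn (map (@deg X) ms).
Proof.
have -> : sumn (map (@deg X) ms) = sumn (map (@nleaves X) (pmap id ms)).
  by elim: ms => [|[t|] ms IH] //=; rewrite IH.
by rewrite /vee; case: (pmap id ms) => [|t [|t' ts]] //=; rewrite addn0.
Qed.

Lemma vee_eq_None ms : (vee ms == None) = all (pred1 None) ms.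
Proof.
have -> : all (pred1 None) ms = (pmap id ms == [::]) by elim: ms => [|[t|] ms].
by rewrite /vee; case: (pmap id ms) => [|t [|t' ts]].
Qed.

Lemma admissible_vee A ms : all (@admissible A X) ms ->
  (if A is Kbin then size ms <= 2 else true)%N -> admissible A (vee ms).
Proof.
move=> msA size_ms; rewrite /vee.
have : all (fun t => admissible A (Some t)) (pmap id ms).
  by elim: ms msA {size_ms} => [|[t|] ms IH] //= /andP[// tA /IH ->]; rewrite tA.
have : (size (pmap id ms) <= size ms)%N by rewrite size_pmap count_size.
case: (pmap id ms) => [|t [|t' ts]] size_ts tsA //; first by rewrite /= andbT in tsA.
cbv iota; rewrite admissible_Node tsA andbT /=.
by case: A size_ms {msA tsA} => //= /(leq_trans size_ts); rewrite !ltnS leqn0.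
Qed.

Definition adm_tensor A d (q : mon X * mon X) :=
  [&& admissible A q.1, admissible A q.2 & deg q.1 + deg q.2 == d].

Lemma choices_delta_adm_tensor A ts ps :
  {in ts, forall t, {in delta_tree t, forall q, adm_tensor A (nleaves t) q}} ->
  ps \in choices (map (@delta_tree X) ts) ->
  [/\ size ps = size ts, all (@admissible A X) (map fst ps),
      all (@admissible A X) (map snd ps)
    & sumn (map (@deg X) (map fst ps)) + sumn (map (@deg X) (map snd ps))
      = sumn (map (@nleaves X) ts)].
Proof.
elim: ts ps => [|t ts IH] ps tsA; first by rewrite inE => /eqP ->.
case/allpairsP=> -[q ps'] [/= q_t ps'_ts ->] /=.
have /and3P[q1A q2A /eqP deg_q] := tsA t (mem_head _ _) q q_t.
have [|-> ps'1A ps'2A deg_ps'] := IH ps' _ ps'_ts.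
  by move=> u u_ts; apply: tsA; rewrite inE u_ts orbT.
by rewrite q1A q2A -deg_q -deg_ps' addnACA.
Qed.

Lemma delta_tree_adm_tensor A t : admissible A (Some t) ->
  {in delta_tree t, forall q, adm_tensor A (nleaves t) q}.
Proof.
elim/tree_ind_in: t => [x|ts IH] tA q.
  by rewrite !inE => /pred2P[]->; case: A tA.
move: tA; rewrite admissible_Node => /and3P[_ size_ts tsA] /mapP[ps ps_ts ->].
have [|size_ps ps1A ps2A deg_ps] := @choices_delta_adm_tensor A ts ps _ ps_ts.
  by move=> u u_ts; apply: IH => //; apply: (allP tsA).
have vee_adm ms : all (@admissible A X) ms -> size ms = size ts ->
    admissible A (vee ms).
  move=> msA size_ms; apply: admissible_vee msA _.
  by case: A size_ts {IH tsA ps1A ps2A} => //= /eqP size_ts; rewrite size_ms size_ts.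
by rewrite /adm_tensor /= !deg_vee deg_ps eqxx !vee_adm ?size_map.
Qed.

Lemma delta_tree_right_unit t : reduced t ->
  filter (fun q => q.2 == None) (delta_tree t) = [:: (Some t, None)].
Proof.
elim/tree_ind_in: t => [x|ts IH] //= /andP[size_ts tsR].
rewrite filter_map (@eq_filter _ _ (all (fun q => q.2 == None))); last first.
  by move=> ps /=; rewrite vee_eq_None all_map.
rewrite filter_choices -map_comp.
have -> : [seq (filter (fun q => q.2 == None) \o @delta_tree X) t | t <- ts]
          = [seq [:: (Some t, None)] | t <- ts].
  by apply/eq_in_map => t t_ts /=; apply: IH => //; apply: (allP tsR).
rewrite (map_comp (fun q => [:: q])) choices_singletons /= -!map_comp.
have -> : vee [seq None | _ <- ts] = None :> mon X.
  by apply/eqP; rewrite vee_eq_None all_map; apply/allP.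
rewrite /vee (_ : pmap _ _ = ts); last by elim: ts {IH size_ts tsR} => //= t ts ->.
by case: ts size_ts {IH tsR} => [|t [|t' ts]].
Qed.

Lemma count_delta_tree_right_unit t T : reduced t ->
  count_mem (T, None) (delta_tree t) = (Some t == T).
Proof.
move=> t_red; rewrite -(@eq_count _ (predI (pred1 (T, None)) (fun q => q.2 == None))).
  by rewrite -count_filter delta_tree_right_unit //= addn0 xpair_eqE eqxx andbT.
by move=> q /=; rewrite andb_idr // => /eqP ->.
Qed.

Lemma perm_delta_tree_swap t : perm_eq (map swap_pair (delta_tree t)) (delta_tree t).
Proof.
elim/tree_ind_in: t => [x|ts IH] /=; first by rewrite (perm_catC [:: _]).
set vee2 := fun ps : seq (mon X * mon X) => (vee (map fst ps), vee (map snd ps)).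
have vee2_swap : swap_pair \o vee2 =1 vee2 \o map swap_pair.
  by move=> ps; rewrite /vee2 /= -!map_comp.
rewrite -map_comp (eq_map vee2_swap) map_comp map_choices.
apply/perm_map/perm_choices; rewrite -map_comp all2E !size_map eqxx zip_map all_map.
exact/allP.
Qed.

End Trees.

Section Coproduct.
Variables (X : countType) (K : fieldType) (A : algkind).
Implicit Types (f g : seq (K * mon X)) (m S T : mon X).

Lemma coef_monom S m : coef (monom K S) m = (S == m)%:R.
Proof. by rewrite /coef big_seq1 mul1r. Qed.

Lemma coef_eq0_homog f n m : homog n f -> deg m != n -> coef f m = 0.
Proof. by move=> f_hom; apply: contraNeq => /f_hom ->. Qed.

Lemma coef_deltaA f P :
  coef (deltaA f) P = \sum_(p <- f) p.1 * (count_mem P (delta_mon p.2))%:R.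
Proof.
rewrite /coef /deltaA big_flatten /= big_map; apply: eq_bigr => p _.
rewrite big_map -mulr_sumr; congr (_ * _).
by elim: (delta_mon p.2) => [|q s IH]; rewrite ?big_nil ?big_cons //= IH natrD.
Qed.

Lemma coef_deltaA_swap f T1 T2 : coef (deltaA f) (T1, T2) = coef (deltaA f) (T2, T1).
Proof.
rewrite !coef_deltaA; apply: eq_bigr => -[c m] _ /=; congr (_ * _%:R).
have swap_m : perm_eq (map swap_pair (delta_mon m)) (delta_mon m).
  by case: m => [t|] //; apply: perm_delta_tree_swap.
rewrite -(permP swap_m) count_map.
by apply: eq_count => -[U1 U2]; rewrite /= !xpair_eqE andbC.
Qed.

Lemma coef_deltaA_adm_tensor f n P : inA A f -> homog n f ->
  coef (deltaA f) P != 0 -> adm_tensor A n P.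
Proof.
move=> fA f_hom; pose mult m := (count_mem P (delta_mon m))%:R : K.
rewrite coef_deltaA (sum_coef_undup f mult) => /sumr_neq0_exists[m m_f].
rewrite mulf_eq0 negb_or => /andP[/f_hom deg_m count_nz].
have mA : admissible A m by move: m_f; rewrite mem_undup => /mapP[p /(allP fA) pA ->].
have P_m : P \in delta_mon m.
  by apply: contraNT count_nz => /count_memPn; rewrite /mult => ->.
case: m mA deg_m P_m {m_f count_nz} => [t tA /= <-|_ <-].
  exact: delta_tree_adm_tensor.
by rewrite inE => /eqP ->.
Qed.

Lemma coef_deltaA_right_unit f n T : inA A f -> homog n f -> (0 < n)%N ->
  coef (deltaA f) (T, None) = coef f T.
Proof.
move=> fA f_hom n_gt0; pose mult m := (count_mem (T, None) (delta_mon m))%:R : K.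
rewrite coef_deltaA [RHS]/coef.
apply: (eq_sum_supp (h1 := mult) (h2 := fun m => (m == T)%:R)) => m f_m.
have /mapP[p /(allP fA) pA m_p] := mem_coef_neq0 f_m.
case: m f_m m_p => [t f_t m_p|/f_hom n0]; last by move: n_gt0; rewrite -n0.
by rewrite /mult /= count_delta_tree_right_unit //; move: pA; rewrite -m_p => /andP[].
Qed.

Lemma coef_primitive_rhs f T1 T2 :
  coef ([seq (p.1, (p.2, None)) | p <- f] ++ [seq (p.1, (None, p.2)) | p <- f]) (T1, T2)
  = (T2 == None)%:R * coef f T1 + (T1 == None)%:R * coef f T2.
Proof.
rewrite /coef big_cat !big_map !mulr_sumr; congr (_ + _); apply: eq_bigr => p _ /=.
  by rewrite mulrCA -natrM mulnb xpair_eqE [None == T2]eq_sym andbC.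
by rewrite mulrCA -natrM mulnb xpair_eqE [None == T1]eq_sym.
Qed.

Lemma pairing_shuffle f g1 g2 : inA A f ->
  pairing f (shuffle A g1 g2) =
  \sum_(P <- deltaA f) P.1 * (coef g1 P.2.1 * coef g2 P.2.2).
Proof.
move=> fA; rewrite /pairing /deltaA big_flatten big_map big_seq [RHS]big_seq.
by apply: eq_bigr => p p_f; rewrite /shuffle (allP fA p p_f) big_map mulr_sumr.
Qed.

Lemma pairing_shuffle_monom f S T : inA A f ->
  pairing f (shuffle A (monom K S) (monom K T)) = coef (deltaA f) (S, T).
Proof.
move=> fA; rewrite pairing_shuffle //; apply: eq_bigr => -[c [T1 T2]] _ /=.
by rewrite !coef_monom -natrM mulnb xpair_eqE ![_ == T1]eq_sym ![_ == T2]eq_sym.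
Qed.

End Coproduct.

Section Proposition.
Variables (X : countType) (K : fieldType) (A : algkind).
Implicit Types (f g : seq (K * mon X)) (S T : mon X).

Lemma primitive_pairing_shuffle f g1 g2 d1 d2 : inA A f -> primitive f ->
  homog d1 g1 -> (0 < d1)%N -> homog d2 g2 -> (0 < d2)%N ->
  pairing f (shuffle A g1 g2) = 0.
Proof.
move=> fA f_prim g1_hom d1_gt0 g2_hom d2_gt0.
have g_None (g : seq (K * mon X)) d : homog d g -> (0 < d)%N -> coef g None = 0.
  by move=> g_hom d_gt0; apply: coef_eq0_homog g_hom _; rewrite eq_sym -lt0n.
pose h P := coef g1 P.1 * coef g2 P.2.
rewrite pairing_shuffle // (eq_sum_coef h f_prim) big_cat !big_map /h /=.
rewrite (g_None _ _ g1_hom) ?(g_None _ _ g2_hom) //.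
by rewrite !big1 ?addr0 // => p _; rewrite ?mul0r ?mulr0.
Qed.

Lemma dpart_eq0P f n S : inA A f -> homog n f ->
  (forall U, dpart S f U = 0) <->
  (forall g, inA A g -> homog (n - deg S) g -> pairing f (shuffle A (monom K S) g) = 0).
Proof.
move=> fA f_hom; split=> [dS0 g _ _|orth U].
  pose h P := coef (monom K S) P.1 * coef g P.2.
  rewrite pairing_shuffle // (eq_sum_supp (h1 := h) (h2 := fun _ => 0)).
    by rewrite big1 // => p _; rewrite mulr0.
  move=> [T1 T2]; rewrite /h coef_monom.
  have [<-|] := eqVneq S T1; last by rewrite mul0r.
  by rewrite -/(dpart S f T2) dS0 eqxx.
have [//|SU_nz] := eqVneq (dpart S f U) 0.
have /and3P[_ UA /eqP deg_SU] := coef_deltaA_adm_tensor fA f_hom SU_nz.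
rewrite /dpart -(pairing_shuffle_monom _ _ fA) orth //; first by rewrite /inA /= UA.
move=> V; rewrite coef_monom; have [<- _|] := eqVneq U V; last by rewrite eqxx.
by rewrite -deg_SU addKn.
Qed.

Lemma primitive_of_coef_deltaA f n : inA A f -> homog n f -> (0 < n)%N ->
  (forall S T, admissible A S -> admissible A T -> (0 < deg S)%N ->
     deg S + deg T = n -> (2 * deg S < n + 1)%N -> coef (deltaA f) (S, T) = 0) ->
  primitive f.
Proof.
move=> fA f_hom n_gt0 coef0 [T1 T2]; rewrite coef_primitive_rhs.
have f_None : coef f None = 0 by apply: coef_eq0_homog f_hom _; rewrite eq_sym -lt0n.
have right_unit := coef_deltaA_right_unit _ fA f_hom n_gt0.
case: T2 => [t2|]; last by rewrite right_unit f_None mulr0 addr0 mul1r.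
case: T1 => [t1|]; last by rewrite coef_deltaA_swap right_unit mul0r add0r mul1r.
rewrite !mul0r addr0; have [//|nz] := eqVneq (coef (deltaA f) (Some t1, Some t2)) 0.
have /and3P[/= t1A t2A /eqP /= deg_t12] := coef_deltaA_adm_tensor fA f_hom nz.
have [t1_gt0 t2_gt0] : (0 < nleaves t1)%N /\ (0 < nleaves t2)%N.
  by split; apply: nleaves_gt0; [case/andP: t1A | case/andP: t2A].
have [small_t1|big_t1] := ltnP (2 * nleaves t1) (n + 1); first by apply: coef0.
by rewrite coef_deltaA_swap; apply: coef0 => //=; lia.
Qed.

End Proposition.

Theorem proposition4p7p1 (X : countType) (K : fieldType)
  (charK : [pchar K] =i pred0) (A : algkind) (n : nat)
  (f : seq (K * mon X)) (fA : inA A f) (n_ge1 : (1 <= n)%N) (fhom : homog n f) :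
  (* (i) *)
  (primitive f ->
   forall g1 g2 : seq (K * mon X), inA A g1 -> inA A g2 ->
     (exists d1, (1 <= d1)%N /\ homog d1 g1) ->
     (exists d2, (1 <= d2)%N /\ homog d2 g2) ->
     pairing f (shuffle A g1 g2) = 0)
  /\
  (* (ii) *)
  (forall (S : mon X) (k : nat), admissible A S -> deg S = k ->
     (1 <= k)%N -> (k <= n - 1)%N ->
     ((forall U, dpart S f U = 0) <->
      (forall g : seq (K * mon X), inA A g -> homog (n - k) g ->
         pairing f (shuffle A (monom K S) g) = 0)))
  /\
  (* (iii) *)
  ((forall (S T : mon X) (k : nat), admissible A S -> admissible A T ->
      deg S = k -> deg T = (n - k)%N -> (1 <= k)%N -> (2 * k < n + 1)%N ->
      pairing f (shuffle A (monom K S) (monom K T)) = 0) ->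
   primitive f).
Proof.
split; [|split].
- move=> f_prim g1 g2 _ _ [d1 [d1_gt0 g1_hom]] [d2 [d2_gt0 g2_hom]].
  exact: primitive_pairing_shuffle fA f_prim g1_hom d1_gt0 g2_hom d2_gt0.
- by move=> S k _ <- _ _; apply: dpart_eq0P.
- move=> orth; apply: (primitive_of_coef_deltaA fA fhom n_ge1).
  move=> S T SA TA S_gt0 deg_ST small_S.
  rewrite -(pairing_shuffle_monom _ _ fA) (orth _ _ (deg S)) //; lia.
Qed.
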